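(* Fix $j\in\{0,\dots,4\}$ and let $r\in\Lambda_j$ be primitive in $\Lambda_j$ with $r^2>0$. Then $r$ is a root of $\Lambda_j$ if and only if either $r^2\in\{1,2\}$, or $r^2\in\{3,6\}$ and $r\in 3\Lambda_j'$, where $\Lambda_j'$ is the dual lattice of $\Lambda_j$.
   Context: Let $\omega=e^{2\pi i/3}$, $\mathcal{E}=\mathbb{Z}[\omega]$, $\theta=\sqrt{-3}$. Let $\Lambda=\mathcal{E}^5$ with Hermitian form $h(x,y)=-x_0\bar y_0+x_1\bar y_1+\dots+x_4\bar y_4$, and write $x\cdot y$ for $h(x,y)$ and $x^2=h(x,x)$. For $j=0,\dots,4$, $\Lambda_j=\mathbb{Z}^{5-j}\oplus\theta\mathbb{Z}^j\subset\mathcal{E}^5$ is the $\mathbb{Z}$-lattice of vectors fixed by the antilinear map $(x_0,\dots,x_4)\mapsto(\bar x_0,\dots,\bar x_{4-j},-\bar x_{5-j},\dots,-\bar x_4)$, with the (real, integral) restriction of $h$. A root of $\Lambda_j$ is a primitive vector $r\in\Lambda_j$ with $r^2>0$ such that the reflection $x\mapsto x-2\frac{x\cdot r}{r^2}r$ preserves $\Lambda_j$. *)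

From mathcomp Require Import all_boot all_order all_algebra.
Set Implicit Arguments. Unset Strict Implicit. Unset Printing Implicit Defensive.
Import Order.TTheory GRing.Theory Num.Theory.
Local Open Scope ring_scope.

(* Coordinates of Lambda_j = Z^{5-j} (+) theta Z^j inside E^5:
   a vector of Lambda_j is (a_0,...,a_{4-j}, theta b_{5-j}, ..., theta b_4)
   with a_i, b_i integers; we represent it by the integer coordinate vector
   (a_0,...,a_{4-j}, b_{5-j},...,b_4) : 'I_5 -> int.
   The restriction of h is then  -a_0 a_0' + sum a_i a_i' + 3 sum b_i b_i'
   since (theta b)(conj (theta b')) = 3 b b'. *)

Definition wt (j i : 'I_5) : int :=
  if (val i == 0)%N then -1 else if (5 - val j <= val i)%N then 3 else 1.

Definition ldot (j : 'I_5) (x y : 'I_5 -> int) : int :=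
  \sum_(i < 5) wt j i * x i * y i.

Definition qdot (j : 'I_5) (x y : 'I_5 -> rat) : rat :=
  \sum_(i < 5) (wt j i)%:~R * x i * y i.

Definition toQ (x : 'I_5 -> int) : 'I_5 -> rat := fun i => (x i)%:~R.

Definition primitive (r : 'I_5 -> int) : Prop :=
  r <> (fun _ => 0) /\
  forall (k : int) (s : 'I_5 -> int), (forall i, r i = k * s i) -> k = 1 \/ k = -1.

Definition refl_preserves (j : 'I_5) (r : 'I_5 -> int) : Prop :=
  forall x : 'I_5 -> int, exists y : 'I_5 -> int, forall i,
    (y i)%:~R = (x i)%:~R - 2 * (ldot j x r)%:~R / (ldot j r r)%:~R * (r i)%:~R :> rat.

Definition is_root (j : 'I_5) (r : 'I_5 -> int) : Prop :=
  primitive r /\ 0 < ldot j r r /\ refl_preserves j r.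

Definition in_dual (j : 'I_5) (y : 'I_5 -> rat) : Prop :=
  forall x : 'I_5 -> int, exists z : int, qdot j y (toQ x) = z%:~R.

Definition in_3dual (j : 'I_5) (r : 'I_5 -> int) : Prop :=
  exists y : 'I_5 -> rat, in_dual j y /\ forall i, toQ r i = 3 * y i.

From mathcomp Require Import all_boot all_order all_algebra ring.
Set Implicit Arguments. Unset Strict Implicit. Unset Printing Implicit Defensive.
Import Order.TTheory GRing.Theory Num.Theory.
Local Open Scope ring_scope.

(* Testing the reflection on the basis vectors shows that it preserves
   Lambda_j iff n := r^2 divides every 2 (e_k . r) r, hence, r being
   primitive, iff n divides every 2 (e_k . r) = 2 w_k r_k.  As every weight
   w_k divides 3, this forces n | 6.  For n in {1, 2} the condition is
   automatic; for n in {3, 6} it says exactly that 3 divides every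
   w_k r_k = e_k . r, i.e. that r / 3 lies in the dual lattice. *)

Lemma primitive_dvdz (r : 'I_5 -> int) (n a : int) : primitive r -> n != 0 ->
  (forall i, (n %| a * r i)%Z) -> (n %| a)%Z.
Proof.
move=> [_ prim_r] n0 n_dvd.
have [u [v Bezout]] := Bezoutz n a; set g := gcdz n a in Bezout.
have g0 : g != 0 by rewrite gcdz_eq0 negb_and n0.
have n_dvd_g : forall i, (n %| g * r i)%Z.
  move=> i; rewrite -Bezout mulrDl -!mulrA.
  by rewrite rpredD // dvdz_mull // dvdz_mulr.
have Eg := divzK (intdiv.dvdz_gcdl n a); rewrite -/g in Eg.
have r_mul : forall i, r i = (n %/ g)%Z * (r i %/ (n %/ g)%Z)%Z.
  move=> i; rewrite mulrC divzK //.
  by rewrite -(@dvdz_mul2r g _ _ g0) Eg mulrC.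
have [unit|unit] := prim_r _ _ r_mul; rewrite unit ?mul1r ?mulN1r in Eg;
  by rewrite -Eg ?dvdzE ?abszN -?dvdzE; exact: intdiv.dvdz_gcdr.
Qed.

Definition basis_vec (k : 'I_5) : 'I_5 -> int := fun i => (i == k)%:R.

Lemma ldot_basis j k x : ldot j (basis_vec k) x = wt j k * x k.
Proof.
rewrite /ldot (bigD1 k) //= big1 ?addr0 => [|i /negbTE ik];
  by rewrite /basis_vec ?eqxx ?ik ?mulr1 ?mulr0 ?mul0r.
Qed.

Lemma qdot_basis j k y : qdot j y (toQ (basis_vec k)) = (wt j k)%:~R * y k.
Proof.
rewrite /qdot (bigD1 k) //= big1 ?addr0 => [|i /negbTE ik];
  by rewrite /toQ /basis_vec ?eqxx ?ik ?mulr1 ?mulr0.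
Qed.

Lemma wt_dvd3 j i : (wt j i %| 3)%Z.
Proof. by rewrite /wt; case: ifP => _; [|case: ifP => _]. Qed.

Lemma refl_preservesP j r : primitive r -> ldot j r r != 0 ->
  refl_preserves j r <-> forall k, (ldot j r r %| 2 * (wt j k * r k))%Z.
Proof.
move=> prim_r n0; have n0Q : (ldot j r r)%:~R != 0 :> rat by rewrite intr_eq0.
split=> [preserves k | n_dvd x].
  apply: (primitive_dvdz prim_r n0) => i.
  have [y /(_ i)] := preserves (basis_vec k); rewrite ldot_basis => Ey.
  apply/dvdzP; exists (basis_vec k i - y i); apply: (@intr_inj rat).
  by rewrite !rmorphM /= rmorphB /= Ey; field.
have n_dvd_x : (ldot j r r %| 2 * ldot j x r)%Z.
  rewrite /ldot mulr_sumr; apply: rpred_sum => i _.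
  rewrite (_ : 2 * _ = x i * (2 * (wt j i * r i))); last by ring.
  exact: dvdz_mull.
have Ec := divzK n_dvd_x; set c := (_ %/ _)%Z in Ec.
have EcQ : c%:~R = 2 * (ldot j x r)%:~R / (ldot j r r)%:~R :> rat.
  by apply: (canRL (mulfK n0Q)); rewrite -rmorphM /= Ec rmorphM.
by exists (fun i => x i - c * r i) => i; rewrite -EcQ rmorphB rmorphM.
Qed.

Lemma in_3dualP j r : in_3dual j r <-> forall k, (3 %| wt j k * r k)%Z.
Proof.
split=> [[y [y_dual Ey]] k | three_dvd].
  have [z] := y_dual (basis_vec k); rewrite qdot_basis => Ez.
  apply/dvdzP; exists z; apply: (@intr_inj rat).
  by rewrite !rmorphM /= -Ez; move: (Ey k); rewrite /toQ => ->; ring.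
exists (fun i => (r i)%:~R / 3); split=> [x|i]; last by rewrite /toQ; field.
exists (\sum_(i < 5) ((wt j i * r i) %/ 3)%Z * x i).
rewrite /qdot rmorph_sum; apply: eq_bigr => i _.
have Eq := divzK (three_dvd i); set q := (_ %/ _)%Z in Eq.
have EqQ : q%:~R = (wt j i)%:~R * (r i)%:~R / 3 :> rat.
  by rewrite -rmorphM /= -Eq rmorphM /=; field.
by rewrite rmorphM /= EqQ /toQ; field.
Qed.

Lemma dvdz6_pos (n : int) : 0 < n -> (n %| 6)%Z -> [\/ n = 1, n = 2, n = 3 | n = 6].
Proof.
case: n => // m _; rewrite dvdzE /= => m_dvd.
have := dvdn_leq (isT : (0 < 6)%N) m_dvd.
case: m m_dvd => [|[|[|[|[|[|[|m]]]]]]] //= _ _;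
  by [constructor 1 | constructor 2 | constructor 3 | constructor 4].
Qed.

Section ReflectionCondition.

Variables (j : 'I_5) (r : 'I_5 -> int).
Hypothesis n_dvd : forall k, (ldot j r r %| 2 * (wt j k * r k))%Z.

Lemma norm_dvd6 : primitive r -> ldot j r r != 0 -> (ldot j r r %| 6)%Z.
Proof.
move=> prim_r n0; apply: (primitive_dvdz prim_r n0) => i.
apply: dvdz_trans (n_dvd i) _.
have -> : 6 * r i = 2 * (3 * r i) by ring.
by rewrite dvdz_mul2l // dvdz_mul ?wt_dvd3.
Qed.

Lemma three_dvd_wt_mul : (3 %| ldot j r r)%Z -> forall k, (3 %| wt j k * r k)%Z.
Proof.
move=> three_dvd_n k.
rewrite (_ : wt j k * r k = 3 * (wt j k * r k) - 2 * (wt j k * r k)); last by ring.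
by apply: rpredB; [exact: dvdz_mulr (dvdzz 3) | exact: dvdz_trans three_dvd_n (n_dvd k)].
Qed.

End ReflectionCondition.

Theorem lemma5p4 (j : 'I_5) (r : 'I_5 -> int)
  (hprim : primitive r) (hpos : 0 < ldot j r r) :
  is_root j r <->
  ((ldot j r r = 1 \/ ldot j r r = 2) \/
   ((ldot j r r = 3 \/ ldot j r r = 6) /\ in_3dual j r)).
Proof.
have n0 : ldot j r r != 0 by rewrite gt_eqF.
rewrite /is_root (refl_preservesP hprim n0) in_3dualP.
split=> [[_ [_ n_dvd]] | cases].
  have to_dual := three_dvd_wt_mul n_dvd.
  have [] := dvdz6_pos hpos (norm_dvd6 n_dvd hprim n0) => En; rewrite En in to_dual *;
    by [left; left | left; right | right; split; [left | exact: to_dual]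
       | right; split; [right | exact: to_dual]].
do 2!split=> //; move=> k.
have [[->|->]|[En three_dvd]] := cases; first exact: dvd1z.
  exact: dvdz_mulr.
have six_dvd : (6 %| 2 * (wt j k * r k))%Z by apply: (@dvdz_mul 2 3).
by case: En => ->; first exact: dvdz_trans six_dvd.
Qed.
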